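(* Let $\phi$ be an orientation-preserving isometry of a spin, closed, hyperbolic $4$-manifold $M=\Gamma\backslash H^4$, and let $\hat\phi$ be a lift of $\phi$ to a symmetry of a spin structure $\hat\Gamma\backslash\mathrm{SU}(1,1;\mathbb H)$ on $M$. Let $f\in\mathrm{SO}^+(4,1)$ be such that $\phi=f_\star$, and let $\hat f\in\mathrm{SU}(1,1;\mathbb H)$ be the lift of $f$ such that $\hat\phi=\hat f_\star$. Let $P$ be an isolated fixed point of $\phi$, and let $x\in H^4$ with $\Gamma x=P$. Let $g\in\mathrm{SO}^+(4,1)$ with $ge_5=x$, and let $\hat g\in\mathrm{SU}(1,1;\mathbb H)$ be a lift of $g$. Let $\gamma$ be the unique element of $\Gamma$ such that $\gamma fx=x$, and let $\hat\gamma$ be the unique element of $\hat\Gamma$ lifting $\gamma$. Then $\hat g^{-1}\hat\gamma\hat f\hat g=\mathrm{diag}(p,q)$ with $p$ and $q$ unit quaternions, and $$\nu(\hat\phi,P)=\frac{1}{2(\mathrm{Re}(p)-\mathrm{Re}(q))}.$$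
   Context: $\mathrm{SU}(1,1;\mathbb H)=\{A\in\mathbb H(2):A^*JA=J\}$, $J=\mathrm{diag}(1,-1)$, acts on $B^4=\{q\in\mathbb H:|q|<1\}$ by $\begin{pmatrix}a&b\\c&d\end{pmatrix}\cdot q=(aq+b)(cq+d)^{-1}$. Identify $q_0+q_1\mathbf i+q_2\mathbf j+q_3\mathbf k$ with $(q_0,\dots,q_3)\in\mathbb R^4$, let $H^4=\{x\in\mathbb R^5: x_1^2+\dots+x_4^2-x_5^2=-1,\ x_5>0\}$ and $\zeta:B^4\to H^4$, $\zeta(y)=(2y/(1-|y|^2),(1+|y|^2)/(1-|y|^2))$. The double covering epimorphism $\eta:\mathrm{SU}(1,1;\mathbb H)\to\mathrm{SO}^+(4,1)$ (representing $\mathrm{Spin}^+(4,1)$) is characterized by $\zeta(A\cdot y)=\eta(A)\zeta(y)$. $\Gamma\subset\mathrm{SO}^+(4,1)$ is discrete and torsion-free with $M$ closed, and $\hat\Gamma\subset\mathrm{SU}(1,1;\mathbb H)$ maps isomorphically onto $\Gamma$ under $\eta$. Isometries $f_\star(\Gamma x)=\Gamma fx$ ($f$ normalizing $\Gamma$) and symmetries $\hat f_\star(\hat\Gamma\hat h)=\hat\Gamma\hat f\hat h$ ($\hat f$ normalizing $\hat\Gamma$). $\mathrm{Spin}(4)=\eta^{-1}(\mathrm{Stab}(e_5))=\{\mathrm{diag}(p,q):|p|=|q|=1\}$, with half-spin representations (Atiyah–Bott convention) $\Delta_4^+(\mathrm{diag}(p,q))=\Psi_1(p)$, $\Delta_4^-(\mathrm{diag}(p,q))=\Psi_1(q)$,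 where $\Psi_1(a+b\mathbf j)=\begin{pmatrix}a&b\\-\overline b&\overline a\end{pmatrix}$ for $a,b\in\mathbb C$. For an isolated fixed point $P=\Gamma ge_5$ of $\phi=\hat f_\star$-projection, there is a unique $s\in\mathrm{Spin}(4)$ with $\hat\Gamma\hat f\hat g=\hat\Gamma\hat gs$, and the local contribution of $P$ to the Atiyah–Singer $G$-spin formula is $\nu(\hat\phi,P)=\dfrac{\mathrm{tr}\,\Delta_4^+(s)-\mathrm{tr}\,\Delta_4^-(s)}{|\det(I-d\phi_P)|}$, with $d\phi_P$ the differential of $\phi$ at $P$. *)

From HB Require Import structures.
From mathcomp Require Import all_boot all_order all_algebra.
From mathcomp Require Import reals.
From mathcomp Require Import complex.
Set Implicit Arguments. Unset Strict Implicit. Unset Printing Implicit Defensive.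
Import Order.TTheory GRing.Theory Num.Theory.
Local Open Scope ring_scope.

Section Defs.
Variable R : realType.

Record quat := Quat { q0 : R; q1 : R; q2 : R; q3 : R }.

Definition qzero : quat := Quat 0 0 0 0.
Definition qone : quat := Quat 1 0 0 0.
Definition qadd (a b : quat) : quat :=
  Quat (q0 a + q0 b) (q1 a + q1 b) (q2 a + q2 b) (q3 a + q3 b).
Definition qopp (a : quat) : quat := Quat (- q0 a) (- q1 a) (- q2 a) (- q3 a).
Definition qmul (a b : quat) : quat :=
  Quat (q0 a * q0 b - q1 a * q1 b - q2 a * q2 b - q3 a * q3 b)
       (q0 a * q1 b + q1 a * q0 b + q2 a * q3 b - q3 a * q2 b)
       (q0 a * q2 b - q1 a * q3 b + q2 a * q0 b + q3 a * q1 b)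
       (q0 a * q3 b + q1 a * q2 b - q2 a * q1 b + q3 a * q0 b).
Definition qconj (a : quat) : quat := Quat (q0 a) (- q1 a) (- q2 a) (- q3 a).
Definition qnorm2 (a : quat) : R := q0 a ^+ 2 + q1 a ^+ 2 + q2 a ^+ 2 + q3 a ^+ 2.
Definition qinv (a : quat) : quat :=
  let n := qnorm2 a in Quat (q0 a / n) (- q1 a / n) (- q2 a / n) (- q3 a / n).
Definition qre (a : quat) : R := q0 a.

Record hmat := HMat { h00 : quat; h01 : quat; h10 : quat; h11 : quat }.

Definition hmul (A B : hmat) : hmat :=
  HMat (qadd (qmul (h00 A) (h00 B)) (qmul (h01 A) (h10 B)))
       (qadd (qmul (h00 A) (h01 B)) (qmul (h01 A) (h11 B)))
       (qadd (qmul (h10 A) (h00 B)) (qmul (h11 A) (h10 B)))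
       (qadd (qmul (h10 A) (h01 B)) (qmul (h11 A) (h11 B))).
Definition hstar (A : hmat) : hmat :=
  HMat (qconj (h00 A)) (qconj (h10 A)) (qconj (h01 A)) (qconj (h11 A)).
Definition hdiag (p q : quat) : hmat := HMat p qzero qzero q.
Definition hone : hmat := hdiag qone qone.
Definition hJ : hmat := hdiag qone (qopp qone).

Definition SU11H (A : hmat) : Prop := hmul (hstar A) (hmul hJ A) = hJ.

(* Inverse of an element of SU(1,1;H): A^{-1} = J A^* J
   (from A^* J A = J one gets (J A^* J) A = 1). *)
Definition hinv (A : hmat) : hmat := hmul hJ (hmul (hstar A) hJ).

(* Moebius action on B^4: A . q = (a q + b)(c q + d)^{-1} *)
Definition hact (A : hmat) (y : quat) : quat :=
  qmul (qadd (qmul (h00 A) y) (h01 A)) (qinv (qadd (qmul (h10 A) y) (h11 A))).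

Definition qcoord (y : quat) (i : 'I_4) : R :=
  match nat_of_ord i with 0 => q0 y | 1 => q1 y | 2 => q2 y | _ => q3 y end.

Definition zeta (y : quat) : 'cV[R]_5 :=
  let n := qnorm2 y in
  \col_(i < 5)
    (if (i < 4)%N as b return ((i < 4)%N = b -> R) then
       fun h => 2 * qcoord y (Ordinal h) / (1 - n)
     else fun _ => (1 + n) / (1 - n)) erefl.

Definition J5 : 'M[R]_5 := \matrix_(i, j) (if i == j then (if (i < 4)%N then 1 else -1) else 0).
Definition e5 : 'cV[R]_5 := \col_(i < 5) (if (i == 4 :> nat) then 1 else 0).
Definition i4 : 'I_5 := inord 4.

Definition inH4 (x : 'cV[R]_5) : Prop :=
  (x^T *m J5 *m x) 0 0 = -1 /\ 0 < x i4 0.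

Definition SOp41 (A : 'M[R]_5) : Prop :=
  A^T *m J5 *m A = J5 /\ \det A = 1 /\ 0 < A i4 i4.

Definition eta_of (A : hmat) (E : 'M[R]_5) : Prop :=
  forall y : quat, qnorm2 y < 1 -> zeta (hact A y) = E *m zeta y.

Definition is_subgroup5 (G : 'M[R]_5 -> Prop) : Prop :=
  G 1 /\ (forall A B, G A -> G B -> G (A *m B)) /\
  (forall A, G A -> G (invmx A)).

Definition discrete5 (G : 'M[R]_5 -> Prop) : Prop :=
  forall A, G A -> exists2 eps : R, 0 < eps &
    forall B, G B -> (forall i j, `|B i j - A i j| < eps) -> B = A.

Definition torsion_free5 (G : 'M[R]_5 -> Prop) : Prop :=
  forall A, G A -> forall n : nat, (0 < n)%N -> A ^+ n = 1 -> A = 1.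

(* Gamma \ H^4 is compact: some bounded set of H^4 meets every Gamma-orbit *)
Definition cocompact5 (G : 'M[R]_5 -> Prop) : Prop :=
  exists C : R, forall x, inH4 x -> exists2 A, G A & forall i, `|(A *m x) i 0| <= C.

Definition is_subgroupH (G : hmat -> Prop) : Prop :=
  G hone /\ (forall A B, G A -> G B -> G (hmul A B)) /\
  (forall A, G A -> G (hinv A)).

Definition normalizes5 (f : 'M[R]_5) (G : 'M[R]_5 -> Prop) : Prop :=
  forall A, G A <-> G (f *m A *m invmx f).

Definition normalizesH (f : hmat) (G : hmat -> Prop) : Prop :=
  forall A, G A <-> G (hmul f (hmul A (hinv f))).

Definition Spin4 (s : hmat) : Prop :=
  h01 s = qzero /\ h10 s = qzero /\ qnorm2 (h00 s) = 1 /\ qnorm2 (h11 s) = 1.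

Definition Psi1 (x : quat) : 'M[R[i]]_2 :=
  let a := Complex (q0 x) (q1 x) in
  let b := Complex (q2 x) (q3 x) in
  \matrix_(i < 2, j < 2)
    (if (i == 0 :> nat) then (if (j == 0 :> nat) then a else b)
     else (if (j == 0 :> nat) then - conjc b else conjc a)).

Definition Delta4p (s : hmat) : 'M[R[i]]_2 := Psi1 (h00 s).
Definition Delta4m (s : hmat) : 'M[R[i]]_2 := Psi1 (h11 s).

(* Matrix of the differential d(phi)_P, P = Gamma x, x = g e5: phi lifts near x
   to the isometry L = gamma f of H^4 fixing x; its differential is L restricted
   to T_x H^4 = g (span(e1..e4)), written in the frame (g e1, ..., g e4),
   i.e. the upper-left 4x4 block of g^{-1} L g. *)
Definition dphi_mx (g L : 'M[R]_5) : 'M[R]_4 :=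
  let D := invmx g *m L *m g in \matrix_(i < 4, j < 4) D (widen_ord (leqnSn 4) i) (widen_ord (leqnSn 4) j).

(* local contribution nu(hat phi, P), given the s in Spin(4) with
   hat Gamma hat f hat g = hat Gamma hat g s *)
Definition nu_contrib (s : hmat) (g L : 'M[R]_5) : R[i] :=
  (\tr (Delta4p s) - \tr (Delta4m s)) / ((`|\det (1%:M - dphi_mx g L)|)%:C)%C.

End Defs.

(* Let M = g^-1 gam f g in SU(1,1;H), with all letters the chosen lifts.  Since g.0 lies
   over x and gam f fixes x, M fixes 0 in B^4, and an element of SU(1,1;H) fixing 0 is
   diagonal: M = diag(p,q) with |p| = |q| = 1.  Its image eta(M) = g^-1 gam f g acts on
   T_x H^4 = H as y |-> p y conj q.  Any s with f g = h g s, h in hat Gamma, equals M: the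
   image of gam h fixes x, and a point stabilizer of the discrete group Gamma is finite,
   hence trivial since Gamma is torsion-free; eta being injective on hat Gamma, h is the
   inverse of the lift of gam.  Finally tr Psi_1(p) = 2 Re p, and
   det(1 - (y |-> p y conj q)) = 4 (Re p - Re q)^2 for unit quaternions p, q. *)

From HB Require Import structures.
From mathcomp Require Import all_boot all_order all_algebra.
From mathcomp Require Import reals complex.
From mathcomp Require Import ring lra.
Import Order.TTheory GRing.Theory Num.Theory.
Local Open Scope ring_scope.
Set Implicit Arguments. Unset Strict Implicit.

Ltac quat_unfold :=
  rewrite /hinv /qinv /hmul /hstar /hdiag /hone /hJ /qmul /qadd /qopp /qconj
          /qone /qzero /qnorm2 /=.

Ltac quat_ext := repeat match goal with
  | q : quat _ |- _ => destruct q
  | A : hmat _ |- _ => destruct A end;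
  quat_unfold; (congr HMat; congr Quat; ring) || (congr Quat; ring) || ring.

Section Quaternions.
Context {R : realType}.
Implicit Types a b c y w : quat R.

Definition qreal (r : R) : quat R := Quat r 0 0 0.

Lemma qmulA a b c : qmul a (qmul b c) = qmul (qmul a b) c. Proof. quat_ext. Qed.
Lemma qmulDl a b c : qmul (qadd a b) c = qadd (qmul a c) (qmul b c). Proof. quat_ext. Qed.
Lemma qmulDr a b c : qmul c (qadd a b) = qadd (qmul c a) (qmul c b). Proof. quat_ext. Qed.
Lemma qmulq1 a : qmul a (qone R) = a. Proof. quat_ext. Qed.
Lemma qmul1q a : qmul (qone R) a = a. Proof. quat_ext. Qed.
Lemma qmulq0 a : qmul a (qzero R) = qzero R. Proof. quat_ext. Qed.
Lemma qmul0q a : qmul (qzero R) a = qzero R. Proof. quat_ext. Qed.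
Lemma qmulqN a b : qmul a (qopp b) = qopp (qmul a b). Proof. quat_ext. Qed.
Lemma qmulNq a b : qmul (qopp a) b = qopp (qmul a b). Proof. quat_ext. Qed.
Lemma qaddq0 a : qadd a (qzero R) = a. Proof. quat_ext. Qed.
Lemma qadd0q a : qadd (qzero R) a = a. Proof. quat_ext. Qed.
Lemma qaddC a b : qadd a b = qadd b a. Proof. quat_ext. Qed.
Lemma qaddACA a b c (d : quat R) :
  qadd (qadd a b) (qadd c d) = qadd (qadd a c) (qadd b d).
Proof. quat_ext. Qed.
Lemma qsub_eq0 a b : qadd a (qopp b) = qzero R -> a = b.
Proof. case: a b => ????[????] [????]; congr Quat; lra. Qed.

Lemma qconjK a : qconj (qconj a) = a. Proof. quat_ext. Qed.
Lemma qconj0 : qconj (qzero R) = qzero R. Proof. quat_ext. Qed.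
Lemma qconjN a : qconj (qopp a) = qopp (qconj a). Proof. quat_ext. Qed.
Lemma qconjD a b : qconj (qadd a b) = qadd (qconj a) (qconj b). Proof. quat_ext. Qed.
Lemma qconjM a b : qconj (qmul a b) = qmul (qconj b) (qconj a). Proof. quat_ext. Qed.
Lemma qmul_conjq a : qmul (qconj a) a = qreal (qnorm2 a). Proof. quat_ext. Qed.
Lemma qmulq_conj a : qmul a (qconj a) = qreal (qnorm2 a). Proof. quat_ext. Qed.

Lemma qnorm2M a b : qnorm2 (qmul a b) = qnorm2 a * qnorm2 b. Proof. quat_ext. Qed.
Lemma qnorm2_conj a : qnorm2 (qconj a) = qnorm2 a. Proof. quat_ext. Qed.
Lemma qnorm20 : qnorm2 (qzero R) = 0. Proof. quat_ext. Qed.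
Lemma qnorm2_ge0 a : 0 <= qnorm2 a.
Proof. by rewrite /qnorm2 !addr_ge0 ?sqr_ge0. Qed.

Lemma qmulVq w : qnorm2 w != 0 -> qmul (qinv w) w = qone R.
Proof. by case: w => ????; rewrite /qnorm2 /= => H; quat_unfold; congr Quat; field. Qed.
Lemma qmulqV w : qnorm2 w != 0 -> qmul w (qinv w) = qone R.
Proof. by case: w => ????; rewrite /qnorm2 /= => H; quat_unfold; congr Quat; field. Qed.
Lemma qnorm2V w : qnorm2 w != 0 -> qnorm2 (qinv w) = (qnorm2 w)^-1.
Proof. by case: w => ????; rewrite /qnorm2 /= => H; quat_unfold; field. Qed.

Lemma qinvK w : qnorm2 w != 0 -> qinv (qinv w) = w.
Proof.
move=> Hw; have Hiw : qnorm2 (qinv w) != 0 by rewrite qnorm2V // invr_eq0.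
by rewrite -[qinv (qinv w)]qmulq1 -(qmulVq Hw) qmulA (qmulVq Hiw) qmul1q.
Qed.

Lemma qinvM a b : qnorm2 a != 0 -> qnorm2 b != 0 ->
  qinv (qmul a b) = qmul (qinv b) (qinv a).
Proof.
move=> Ha Hb; have Hab : qnorm2 (qmul a b) != 0 by rewrite qnorm2M mulf_neq0.
rewrite -[RHS]qmulq1 -(qmulqV Hab) !qmulA.
by rewrite -[qmul (qmul (qinv b) _) a]qmulA (qmulVq Ha) qmulq1 (qmulVq Hb) qmul1q.
Qed.

Lemma qinv_unit w : qnorm2 w = 1 -> qinv w = qconj w.
Proof. by move=> H; rewrite /qinv /= H !divr1; case: w {H}. Qed.

Lemma qmul_conjqI a b : qnorm2 a != 0 -> qmul (qconj a) b = qzero R -> b = qzero R.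
Proof.
move=> Ha Hb; have Hc : qnorm2 (qconj a) != 0 by rewrite qnorm2_conj.
by rewrite -[b]qmul1q -(qmulVq Hc) -qmulA Hb qmulq0.
Qed.

End Quaternions.

Section QuaternionMatrices.
Context {R : realType}.
Implicit Types (A B C : hmat R) (a b c d p q y : quat R).

Lemma hmulA A B C : hmul A (hmul B C) = hmul (hmul A B) C.
Proof.
case: A B C => ????[????][????]; rewrite /hmul /=.
by congr HMat; rewrite !qmulDl !qmulDr !qmulA qaddACA.
Qed.
Lemma hmul1m A : hmul (hone R) A = A. Proof. quat_ext. Qed.
Lemma hJJ : hmul (hJ R) (hJ R) = hone R. Proof. quat_ext. Qed.
Lemma hstarK A : hstar (hstar A) = A. Proof. quat_ext. Qed.
Lemma hstarJ : hstar (hJ R) = hJ R. Proof. quat_ext. Qed.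
Lemma hstarM A B : hstar (hmul A B) = hmul (hstar B) (hstar A).
Proof.
case: A B => ????[????]; rewrite /hmul /hstar /=.
by congr HMat; rewrite !qconjD !qconjM qaddC.
Qed.

Lemma hstarJ_mul a b c d : hmul (hstar (HMat a b c d)) (hmul (hJ R) (HMat a b c d)) =
  HMat (qadd (qmul (qconj a) a) (qopp (qmul (qconj c) c)))
       (qadd (qmul (qconj a) b) (qopp (qmul (qconj c) d)))
       (qadd (qmul (qconj b) a) (qopp (qmul (qconj d) c)))
       (qadd (qmul (qconj b) b) (qopp (qmul (qconj d) d))).
Proof.
rewrite /hmul /hstar /hJ /hdiag /=.
by rewrite !qmul1q !qmul0q !qmulNq !qmul1q !qaddq0 !qadd0q !qmulqN.
Qed.

Lemma hmulJ_star a b c d : hmul (HMat a b c d) (hmul (hJ R) (hstar (HMat a b c d))) =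
  HMat (qadd (qmul a (qconj a)) (qopp (qmul b (qconj b))))
       (qadd (qmul a (qconj c)) (qopp (qmul b (qconj d))))
       (qadd (qmul c (qconj a)) (qopp (qmul d (qconj b))))
       (qadd (qmul c (qconj c)) (qopp (qmul d (qconj d)))).
Proof.
rewrite /hmul /hstar /hJ /hdiag /=.
by rewrite !qmul1q !qmul0q !qmulNq !qmul1q !qaddq0 !qadd0q !qmulqN.
Qed.

Lemma SU11H_entries a b c d : SU11H (HMat a b c d) ->
  [/\ qnorm2 a = 1 + qnorm2 c, qnorm2 d = 1 + qnorm2 b &
      qmul (qconj a) b = qmul (qconj c) d].
Proof.
rewrite /SU11H hstarJ_mul !qmul_conjq => HA.
have := congr1 (fun M => q0 (h00 M)) HA; have := congr1 (fun M => q0 (h11 M)) HA.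
move: HA => /(congr1 (@h01 R)) /= /qsub_eq0 Hab Nd Na.
by split => //; lra.
Qed.

(* [J A^* J] is a left inverse of [A]; over the skew field [H] it takes the entry relations
   to see that it is also a right inverse. *)
Lemma SU11H_right A : SU11H A -> hmul A (hmul (hJ R) (hstar A)) = hJ R.
Proof.
case: A => a b c d HA; have [Na Nd Hab] := SU11H_entries HA.
have Nbc : qnorm2 b = qnorm2 c.
  have := congr1 (@qnorm2 R) Hab; rewrite !qnorm2M !qnorm2_conj Na Nd; nra.
have Ha : qnorm2 a != 0 by rewrite Na; have := qnorm2_ge0 c; lra.
have Hacbd : qadd (qmul a (qconj c)) (qopp (qmul b (qconj d))) = qzero R.
  apply: (qmul_conjqI Ha); rewrite qmulDr qmulqN !qmulA Hab qmul_conjq -qmulA qmulq_conj.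
  have -> : qnorm2 d = qnorm2 a by lra.
  by rewrite /qreal /qzero; quat_ext.
rewrite hmulJ_star Hacbd.
have -> : qadd (qmul c (qconj a)) (qopp (qmul d (qconj b))) = qzero R.
  by rewrite -[c]qconjK -[d]qconjK -!qconjM -qconjN -qconjD Hacbd qconj0.
rewrite !qmulq_conj /hJ /hdiag; congr HMat; rewrite /qadd /qopp /qone /qreal /=; congr Quat; lra.
Qed.

Lemma hmulJJ A : hmul (hJ R) (hmul (hJ R) A) = A.
Proof. by rewrite hmulA hJJ hmul1m. Qed.

Lemma hinv_l A : SU11H A -> hmul (hinv A) A = hone R.
Proof. by move=> HA; rewrite /hinv -!hmulA HA hJJ. Qed.

Lemma hinv_r A : SU11H A -> hmul A (hinv A) = hone R.
Proof. by move=> HA; rewrite /hinv !hmulA -[hmul (hmul A _) _]hmulA SU11H_right // hJJ. Qed.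

Lemma SU11H_mul A B : SU11H A -> SU11H B -> SU11H (hmul A B).
Proof.
move=> HA HB; rewrite /SU11H hstarM -hmulA [hmul (hJ R) _]hmulA.
by rewrite [hmul (hstar A) _]hmulA HA.
Qed.

Lemma SU11H_inv A : SU11H A -> SU11H (hinv A).
Proof.
move=> HA; rewrite /SU11H /hinv !hstarM hstarJ hstarK -!hmulA !hmulJJ.
rewrite [hmul A _]hmulA [hmul (hmul A _) _]hmulA -[hmul (hmul A _) _]hmulA.
by rewrite SU11H_right // hmulJJ.
Qed.

Lemma SU11H_diag p q : qnorm2 p = 1 -> qnorm2 q = 1 -> SU11H (hdiag p q).
Proof.
move=> Hp Hq; rewrite /SU11H hstarJ_mul !qmul_conjq Hp Hq qconj0 !qmulq0 !qmul0q.
by rewrite /hJ /hdiag; congr HMat; quat_ext.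
Qed.

End QuaternionMatrices.

Section MobiusAction.
Context {R : realType}.
Implicit Types (A B : hmat R) (a b c d p q y : quat R).

Lemma qnorm2_affine a b y : qnorm2 (qadd (qmul a y) b) =
  qnorm2 a * qnorm2 y + qnorm2 b + 2 * q0 (qmul (qconj y) (qmul (qconj a) b)).
Proof. quat_ext. Qed.

Lemma SU11H_denominator a b c d y : SU11H (HMat a b c d) ->
  qnorm2 (qadd (qmul c y) d) = qnorm2 (qadd (qmul a y) b) + 1 - qnorm2 y.
Proof.
by case/SU11H_entries => Na Nd Hab; rewrite !qnorm2_affine Hab Na Nd; ring.
Qed.

Lemma SU11H_denominator_gt0 A y : SU11H A -> qnorm2 y < 1 ->
  0 < qnorm2 (qadd (qmul (h10 A) y) (h11 A)).
Proof.
case: A => a b c d HA Hy /=; rewrite (SU11H_denominator y HA).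
by have := qnorm2_ge0 (qadd (qmul a y) b); lra.
Qed.

Lemma hact_ball A y : SU11H A -> qnorm2 y < 1 -> qnorm2 (hact A y) < 1.
Proof.
move=> HA Hy; have Hd := SU11H_denominator_gt0 HA Hy.
case: A HA Hd => a b c d HA /= Hd.
rewrite /hact /= qnorm2M qnorm2V ?gt_eqF // ltr_pdivrMr // mul1r.
by rewrite (SU11H_denominator y HA); lra.
Qed.

Lemma hact_comp A B y : SU11H A -> SU11H B -> qnorm2 y < 1 ->
  hact (hmul A B) y = hact A (hact B y).
Proof.
move=> HA HB Hy; have HBy := hact_ball HB Hy.
have HdA := SU11H_denominator_gt0 HA HBy; have HdB := SU11H_denominator_gt0 HB Hy.
case: A B HA HB HBy HdA HdB => a' b' c' d' [a b c d] HA HB.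
rewrite /hact /hmul /=.
set u := qadd (qmul a y) b; set w := qadd (qmul c y) d => HBy HdA HdB.
have Hw : qnorm2 w != 0 by rewrite gt_eqF.
have frac x z : qadd (qmul x (qmul u (qinv w))) z = qmul (qadd (qmul x u) (qmul z w)) (qinv w).
  by rewrite qmulDl -!qmulA qmulqV // qmulq1 qmulA.
have compose x z : qadd (qmul (qadd (qmul x a) (qmul z c)) y) (qadd (qmul x b) (qmul z d)) =
    qadd (qmul x u) (qmul z w).
  by rewrite qmulDl -!qmulA qaddACA -!qmulDr.
rewrite !compose !frac; set U := qadd (qmul a' u) _; set V := qadd (qmul c' u) _.
have HV : qnorm2 V != 0.
  by move: HdA; rewrite frac qnorm2M qnorm2V // => /gt_eqF; rewrite mulf_eq0 => /norP[].
have Hiw : qnorm2 (qinv w) != 0 by rewrite qnorm2V // invr_eq0.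
by rewrite qinvM // qinvK // -!qmulA [qmul (qinv w) (qmul w _)]qmulA qmulVq // qmul1q.
Qed.

Lemma hact1 y : hact (hone R) y = y.
Proof.
rewrite /hact /= qmul1q qaddq0 qmul0q qadd0q.
by rewrite qinv_unit ?qmulq1 //; quat_ext.
Qed.

Lemma hact_diag p q y : qnorm2 q = 1 -> hact (hdiag p q) y = qmul (qmul p y) (qconj q).
Proof. by move=> Hq; rewrite /hact /= qaddq0 qmul0q qadd0q qinv_unit. Qed.

Lemma SU11H_fix0 A : SU11H A -> hact A (qzero R) = qzero R ->
  exists p q, [/\ qnorm2 p = 1, qnorm2 q = 1 & A = hdiag p q].
Proof.
case: A => a b c d HA; have [Na Nd Hab] := SU11H_entries HA.
rewrite /hact /= !qmulq0 !qadd0q => Hb.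
have Hd : qnorm2 d != 0 by rewrite Nd; have := qnorm2_ge0 b; lra.
have b0 : b = qzero R by rewrite -[b]qmulq1 -(qmulVq Hd) qmulA Hb qmul0q.
have c0 : c = qzero R.
  have cc0 : qconj c = qzero R.
    by rewrite -[qconj c]qmulq1 -(qmulqV Hd) qmulA -Hab b0 qmulq0 qmul0q.
  by rewrite -[c]qconjK cc0 qconj0.
exists a, d; rewrite Na Nd b0 c0 qnorm20 addr0.
by split.
Qed.

End MobiusAction.

Definition i50 : 'I_5 := @Ordinal 5 0 isT.
Definition i51 : 'I_5 := @Ordinal 5 1 isT.
Definition i52 : 'I_5 := @Ordinal 5 2 isT.
Definition i53 : 'I_5 := @Ordinal 5 3 isT.
Definition i54 : 'I_5 := @Ordinal 5 4 isT.

Lemma ord5_ind (P : 'I_5 -> Prop) :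
  P i50 -> P i51 -> P i52 -> P i53 -> P i54 -> forall i, P i.
Proof.
by move=> ? ? ? ? ? [[|[|[|[|[|n]]]]] Hi] //; rewrite (bool_irrelevance Hi isT).
Qed.

Lemma sum_ord5 {V : nmodType} (F : 'I_5 -> V) :
  \sum_(k < 5) F k = F i50 + F i51 + F i52 + F i53 + F i54.
Proof.
rewrite !big_ord_recr big_ord0 /= add0r.
by congr (_ + _ + _ + _ + _); congr F; apply: val_inj.
Qed.

Section Hyperboloid.
Context {R : realType}.
Implicit Types (A B : hmat R) (E F : 'M[R]_5) (p q u v y : quat R).

Definition qcoordn y (k : nat) : R :=
  match k with 0 => q0 y | 1 => q1 y | 2 => q2 y | _ => q3 y end.

Definition qunit (k : nat) : quat R :=
  Quat (k == 0)%:R (k == 1)%:R (k == 2)%:R (k == 3)%:R.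

Lemma zetaE y (i : 'I_5) : zeta y i 0 =
  if (i < 4)%N then 2 * qcoordn y i / (1 - qnorm2 y) else (1 + qnorm2 y) / (1 - qnorm2 y).
Proof. by rewrite mxE; case: i => [[|[|[|[|[|?]]]]] ?]. Qed.

Lemma e5_delta : e5 R = delta_mx i54 0.
Proof. by apply/matrixP => i j; rewrite (ord1 j) !mxE eqxx andbT -val_eqE; case: eqP. Qed.

Lemma zeta0 : zeta (qzero R) = e5 R.
Proof.
apply/matrixP => i j; rewrite (ord1 j) zetaE qnorm20 mxE subr0 divr1 addr0.
by case: i => [[|[|[|[|[|?]]]]] ?] //=; lra.
Qed.

Lemma zeta_inj u v : qnorm2 u < 1 -> qnorm2 v < 1 -> zeta u = zeta v -> u = v.
Proof.
move=> Hu Hv E; have coord i : zeta u i 0 = zeta v i 0 by rewrite E.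
have hu : 1 - qnorm2 u != 0 by rewrite subr_eq0 eq_sym lt_eqF.
have hv : 1 - qnorm2 v != 0 by rewrite subr_eq0 eq_sym lt_eqF.
have N : qnorm2 u = qnorm2 v.
  by move: (coord i54); rewrite !zetaE /= => /eqP; rewrite eqr_div // => /eqP; nra.
have two : (2 : R) != 0 by rewrite pnatr_eq0.
have c (i : 'I_5) : (i < 4)%N -> qcoordn u i = qcoordn v i.
  by move=> Hi; move: (coord i); rewrite !zetaE Hi -N => /(mulIf (invr_neq0 hu))/(mulfI two).
have := c i50 isT; have := c i51 isT; have := c i52 isT; have := c i53 isT.
by case: u {Hu E coord hu N c} => ????; case: v {Hv hv} => ???? /= -> -> -> ->.
Qed.

Definition half_unit (k : nat) : quat R :=
  Quat ((k == 0)%:R / 2) ((k == 1)%:R / 2) ((k == 2)%:R / 2) ((k == 3)%:R / 2).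

Lemma zeta_half_unit (j : 'I_5) : j != i54 ->
  zeta (half_unit j) = (4 / 3) *: delta_mx j 0 + (5 / 3) *: delta_mx i54 0.
Proof.
move=> Hj; have N : qnorm2 (half_unit j) = 1 / 4.
  by case: j Hj => [[|[|[|[|[|?]]]]] ?] //= _; rewrite /qnorm2 /=; field.
apply/matrixP => i k; rewrite (ord1 k) zetaE N !mxE eqxx !andbT.
case: i => [[|[|[|[|[|?]]]]] ?] //=; rewrite -?val_eqE /=;
  by case: j Hj {N} => [[|[|[|[|[|?]]]]] ?] //= _; field.
Qed.

Lemma eta1 : eta_of (hone R) 1.
Proof. by move=> y _; rewrite hact1 mul1mx. Qed.

Lemma eta_mul A B E F : SU11H A -> SU11H B -> eta_of A E -> eta_of B F ->
  eta_of (hmul A B) (E *m F).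
Proof. by move=> HA HB EA EB y Hy; rewrite hact_comp // EA ?hact_ball // EB // mulmxA. Qed.

Lemma eta_inv A E : SU11H A -> E \in unitmx -> eta_of A E -> eta_of (hinv A) (invmx E).
Proof.
move=> HA HE EA y Hy; have HiA := SU11H_inv HA; have Hz := hact_ball HiA Hy.
have Ey : hact A (hact (hinv A) y) = y by rewrite -hact_comp // hinv_r // hact1.
by rewrite -{2}Ey EA // mulmxA mulVmx // mul1mx.
Qed.

(* [zeta 0] and the [zeta (e_j / 2)] form a basis of [R^5]. *)
Lemma eta_unique A E F : eta_of A E -> eta_of A F -> E = F.
Proof.
move=> HE HF; have EF y : qnorm2 y < 1 -> E *m zeta y = F *m zeta y.
  by move=> Hy; rewrite -HE // -HF.
have c4 : col i54 E = col i54 F.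
  by rewrite !colE -e5_delta -zeta0 EF // qnorm20 ltr01.
have cj j : col j E = col j F.
  have [-> // | Hj] := eqVneq j i54.
  have Hy : qnorm2 (half_unit j) < 1.
    by case: j Hj => [[|[|[|[|[|?]]]]] ?] //= _; rewrite /qnorm2 /=; lra.
  move: (EF _ Hy); rewrite zeta_half_unit // !mulmxDr -!scalemxAr -!colE c4 => /addIr.
  by move/(scalerI _); apply; rewrite mulf_neq0 ?invr_eq0 ?pnatr_eq0.
by apply/matrixP => i j; move/colP: (cj j) => /(_ i); rewrite !mxE.
Qed.

Definition rot5 p q : 'M[R]_5 := \matrix_(i, j)
  if (i < 4)%N && (j < 4)%N then qcoordn (qmul (qmul p (qunit j)) (qconj q)) i
  else (i == j :> nat)%:R.

Lemma eta_diag p q : qnorm2 p = 1 -> qnorm2 q = 1 -> eta_of (hdiag p q) (rot5 p q).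
Proof.
move=> Hp Hq y Hy; rewrite hact_diag //.
have N : qnorm2 (qmul (qmul p y) (qconj q)) = qnorm2 y.
  by rewrite !qnorm2M qnorm2_conj Hp Hq mul1r mulr1.
apply/matrixP => i k; rewrite (ord1 k) [RHS]mxE sum_ord5 !zetaE N !mxE /=.
move: (1 - qnorm2 y) (qnorm2 y) => t n.
by case: i => [[|[|[|[|[|?]]]]] ?] //=; case: p q y {Hp Hq Hy N} => ????[????][????];
  rewrite /qmul /qconj /=; ring.
Qed.

End Hyperboloid.

Lemma exists_collision (T : finType) (F : nat -> T) :
  exists m1 m2, (m1 < m2)%N /\ F m1 = F m2.
Proof.
pose G (i : 'I_#|T|.+1) := F i.
have /injectivePn [i [j nij Eij]] : ~~ injectiveb G.
  by apply/injectiveP => /leq_card; rewrite card_ord ltnn.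
have [lt|lt|eq] := ltngtP i j; [by exists i, j | by exists j, i |].
by move: nij; rewrite (val_inj eq) eqxx.
Qed.

Section EntryBounds.
Context {R : realType}.

Lemma mx_entry_bound m n (A : 'M[R]_(m, n)) :
  exists2 c, 0 <= c & forall i j, `|A i j| <= c.
Proof.
exists (\sum_(k : 'I_m * 'I_n) `|A k.1 k.2|); first exact: sumr_ge0.
by move=> i j; rewrite (bigD1 (i, j)) //= lerDl sumr_ge0.
Qed.

Lemma mulmx_entry_bound m n p (A : 'M[R]_(m, n)) (B : 'M[R]_(n, p)) a b :
  (forall i j, `|A i j| <= a) -> (forall i j, `|B i j| <= b) ->
  forall i j, `|(A *m B) i j| <= n%:R * (a * b).
Proof.
move=> HA HB i j; rewrite mxE; apply: le_trans (ler_norm_sum _ _ _) _.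
have -> : n%:R * (a * b) = \sum_(k < n) (a * b) by rewrite sumr_const card_ord mulr_natl.
apply: ler_sum => k _.
by rewrite normrM ler_pM.
Qed.

Lemma same_cell_close (h x y : R) : 0 < h -> -1 <= x -> -1 <= y ->
  Num.truncn ((x + 1) / h) = Num.truncn ((y + 1) / h) -> `|x - y| < h.
Proof.
move=> hp hx hy E.
have ax : 0 <= (x + 1) / h by rewrite divr_ge0 //; lra.
have ay : 0 <= (y + 1) / h by rewrite divr_ge0 //; lra.
move: (truncn_itv ax) (truncn_itv ay); rewrite E -natr1 => /andP[a1 a2] /andP[b1 b2].
have ex : x = (x + 1) / h * h - 1 by rewrite divfK ?gt_eqF //; lra.
have ey : y = (y + 1) / h * h - 1 by rewrite divfK ?gt_eqF //; lra.
rewrite ex ey ltr_norml; apply/andP; split; nra.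
Qed.

Lemma bounded_mx_seq_close m n (u : nat -> 'M[R]_(m, n)) (h : R) : 0 < h ->
  (forall k i j, `|u k i j| <= 1) ->
  exists k1 k2, (k1 < k2)%N /\ forall i j, `|u k2 i j - u k1 i j| < h.
Proof.
move=> hp Hu; pose K := Num.truncn (2 / h).
pose cell k (ij : 'I_m * 'I_n) := Num.truncn ((u k ij.1 ij.2 + 1) / h).
have cellK k ij : (cell k ij < K.+1)%N.
  rewrite ltnS le_truncn // ler_pM2r ?invr_gt0 //.
  by move: (Hu k ij.1 ij.2); rewrite ler_norml => /andP[_]; lra.
pose F k := [ffun ij => (inord (cell k ij) : 'I_K.+1)].
have [k1 [k2 [lt12 E12]]] := exists_collision F.
exists k1, k2; split=> // i j.
move: (congr1 (fun f : {ffun 'I_m * 'I_n -> 'I_K.+1} => val (f (i, j))) E12).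
rewrite /= !ffunE !inordK // => E.
move: (Hu k1 i j) (Hu k2 i j); rewrite !ler_norml => /andP[a _] /andP[b _].
exact: same_cell_close hp b a (esym E).
Qed.

End EntryBounds.

Section Lorentz.
Context {R : realType}.
Implicit Types P Q D : 'M[R]_5.

Definition lorentz P := P^T *m J5 R *m P = J5 R.

Lemma J5_mulJ5 : J5 R *m J5 R = 1%:M.
Proof.
apply/matrixP => i j; rewrite mxE sum_ord5 !mxE.
by elim/ord5_ind: i; elim/ord5_ind: j;
  rewrite /= ?(mulr0, mul0r, addr0, add0r, mulr1, mulN1r, opprK).
Qed.

Lemma lorentz_unit P : lorentz P -> P \in unitmx.
Proof.
move=> HP; have : (J5 R *m P^T *m J5 R) *m P = 1%:M.
  by rewrite -!mulmxA (mulmxA P^T) HP J5_mulJ5.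
by case/mulmx1_unit.
Qed.

Lemma lorentz_mul P Q : lorentz P -> lorentz Q -> lorentz (P *m Q).
Proof.
move=> HP HQ; rewrite /lorentz trmx_mul !mulmxA -[Q^T *m P^T *m _]mulmxA.
by rewrite -[Q^T *m _ *m P]mulmxA HP HQ.
Qed.

Lemma lorentz_inv P : lorentz P -> lorentz (invmx P).
Proof.
move=> HP; have UP := lorentz_unit HP.
rewrite /lorentz -{1}HP trmx_inv !mulmxA mulVmx ?unitmx_tr // mul1mx.
by rewrite -mulmxA mulmxV // mulmx1.
Qed.

Lemma lorentz_exp P n : lorentz P -> lorentz (P ^+ n).
Proof.
move=> HP; elim: n => [|n IH]; first by rewrite /lorentz expr0 trmx1 mul1mx mulmx1.
by rewrite exprS -mulmxE; apply: lorentz_mul.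
Qed.

Lemma lorentz_gram P (a b : 'I_5) : (P^T *m J5 R *m P) a b =
  P i50 a * P i50 b + P i51 a * P i51 b + P i52 a * P i52 b + P i53 a * P i53 b
  - P i54 a * P i54 b.
Proof. by rewrite mxE sum_ord5 !mxE !sum_ord5 !mxE /=; ring. Qed.

(* Fixing [e5], [P] is block diagonal with an orthogonal [4 x 4] block. *)
Lemma lorentz_fix_entry_bound P : lorentz P -> P *m e5 R = e5 R ->
  forall i j, `|P i j| <= 1.
Proof.
move=> HP Hfix.
have col4 i : P i i54 = e5 R i 0.
  by rewrite -Hfix mxE sum_ord5 !mxE /=; ring.
move=> i j; have [->|Hj] := eqVneq j i54.
  by rewrite col4 mxE; case: eqP; rewrite ?normr1 ?normr0.
have Hj4 : (j < 4)%N by case: j Hj => [[|[|[|[|[|?]]]]] ?].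
have := congr1 (fun M : 'M[R]_5 => M i54 j) HP.
have := congr1 (fun M : 'M[R]_5 => M j j) HP.
rewrite /= !lorentz_gram !col4 !mxE /= eqxx Hj4 eq_sym (negbTE Hj).
rewrite !mul0r !mul1r !add0r => Gjj /eqP; rewrite oppr_eq0 => /eqP P4j.
rewrite P4j mulr0 subr0 in Gjj.
have sq_le1 (x : R) : x * x <= 1 -> `|x| <= 1.
  by move=> Hx; rewrite ler_norml; apply/andP; split; nra.
have s0 := sqr_ge0 (P i50 j); have s1 := sqr_ge0 (P i51 j).
have s2 := sqr_ge0 (P i52 j); have s3 := sqr_ge0 (P i53 j).
by elim/ord5_ind: i; rewrite ?P4j ?normr0 ?ler01 //;
  apply: sq_le1; rewrite -!expr2 in Gjj *; lra.
Qed.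

End Lorentz.

Section Stabilizer.
Context {R : realType}.
Implicit Types g d D : 'M[R]_5.

Lemma lorentz_power_near1 D h : lorentz D -> D *m e5 R = e5 R -> 0 < h ->
  exists2 k, (0 < k)%N & forall i j, `|(D ^+ k - 1) i j| <= 5 * h.
Proof.
move=> LD FD hp.
have Fpow n : D ^+ n *m e5 R = e5 R.
  by elim: n => [|n IH]; rewrite ?expr0 ?mul1mx // exprS -mulmxE -mulmxA IH.
have Lpow n := lorentz_exp n LD.
have [k1 [k2 [lt12 close]]] :=
  bounded_mx_seq_close hp (fun n => lorentz_fix_entry_bound (Lpow n) (Fpow n)).
exists (k2 - k1)%N; first by rewrite subn_gt0.
have U1 := lorentz_unit (Lpow k1).
have -> : D ^+ (k2 - k1) - 1 = (D ^+ k2 - D ^+ k1) *m invmx (D ^+ k1).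
  have -> : D ^+ k2 = D ^+ (k2 - k1) *m D ^+ k1 by rewrite mulmxE -exprD subnK // ltnW.
  by rewrite mulmxBl -mulmxA !mulmxV // mulmx1.
move=> i j; rewrite -[h]mulr1; apply: mulmx_entry_bound => [i' j'|].
  by rewrite !mxE ltW.
apply: lorentz_fix_entry_bound; first exact: lorentz_inv.
by rewrite -{1}(Fpow k1) mulmxA mulVmx // mul1mx.
Qed.

Lemma conj_exp g D n : g \in unitmx ->
  (invmx g *m D *m g) ^+ n = invmx g *m D ^+ n *m g.
Proof.
move=> Ug; elim: n => [|n IH]; first by rewrite !expr0 mulmx1 mulVmx.
by rewrite !exprS IH -!mulmxE !mulmxA -[_ *m g *m invmx g]mulmxA mulmxV // mulmx1.
Qed.

Variable Gam : 'M[R]_5 -> Prop.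
Hypotheses (HGsub : is_subgroup5 Gam) (HGso : forall A, Gam A -> SOp41 A).
Hypotheses (HGdisc : discrete5 Gam) (HGtf : torsion_free5 Gam).

(* A point stabilizer of a discrete group is finite, hence trivial when torsion-free:
   some power of [d] is as close to [1] as we wish. *)
Lemma stabilizer_trivial g d : SOp41 g -> Gam d ->
  d *m (g *m e5 R) = g *m e5 R -> d = 1.
Proof.
case=> Lg _ Gd Hfix; have Ug := lorentz_unit Lg.
have [G1 [GM _]] := HGsub.
have Gpow n : Gam (d ^+ n).
  by elim: n => [|n IH]; rewrite ?expr0 // exprS -mulmxE; apply: GM.
pose D := invmx g *m d *m g.
have LD : lorentz D.
  by apply: lorentz_mul; [apply: lorentz_mul; [exact: lorentz_inv | by case: (HGso Gd)] |].
have FD : D *m e5 R = e5 R by rewrite /D -!mulmxA Hfix mulmxA mulVmx // mul1mx.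
have [cg cg0 Hcg] := mx_entry_bound g; have [ci ci0 Hci] := mx_entry_bound (invmx g).
have [eps eps0 Heps] := HGdisc G1.
pose h := eps / (125 * (cg * ci) + 1).
have c0 : 0 <= 125 * (cg * ci) by rewrite !mulr_ge0.
have hp : 0 < h by rewrite divr_gt0 // ltr_wpDl.
have [k k0 Hk] := lorentz_power_near1 LD FD hp.
have dk : d ^+ k - 1 = g *m (D ^+ k - 1) *m invmx g.
  rewrite conj_exp // mulmxBr mulmxBl mulmx1 mulmxV // !mulmxA mulmxV // mul1mx.
  by rewrite -mulmxA mulmxV // mulmx1.
apply: (HGtf Gd k0); apply: Heps => // i j.
have -> : (d ^+ k) i j - 1%:M i j = (d ^+ k - 1) i j by rewrite !mxE.
rewrite dk; apply: le_lt_trans (mulmx_entry_bound (mulmx_entry_bound Hcg Hk) Hci i j) _.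
have -> : 5%:R * (5%:R * (cg * (5 * h)) * ci) = 125 * (cg * ci) * h :> R by ring.
rewrite /h (mulrA (125 * (cg * ci))) ltr_pdivrMr ?ltr_wpDl //.
by rewrite mulrDr mulr1 [eps * _]mulrC ltrDl.
Qed.

End Stabilizer.

Section LocalContribution.
Context {R : realType}.
Implicit Types (p q : quat R) (g L : 'M[R]_5).

Definition rot4 p q : 'M[R]_4 :=
  \matrix_(i, j) qcoordn (qmul (qmul p (qunit j)) (qconj q)) i.

Lemma dphi_mx_rot5 g L p q : invmx g *m L *m g = rot5 p q -> dphi_mx g L = rot4 p q.
Proof. by move=> E; apply/matrixP => i j; rewrite /dphi_mx E !mxE /= !ltn_ord. Qed.

Lemma det_expand_row0 n (f : 'I_n.+1 -> 'I_n.+1 -> R) :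
  \det (\matrix_(i, j) f i j) = \sum_(j < n.+1)
    (-1) ^+ j * f ord0 j * \det (\matrix_(i < n, k < n) f (lift ord0 i) (lift j k)).
Proof.
rewrite (expand_det_row _ ord0); apply: eq_bigr => j _.
rewrite /cofactor mxE add0n mulrA [_ * (-1) ^+ _]mulrC; congr (_ * \det _).
by apply/matrixP => i k; rewrite !mxE.
Qed.

Lemma det1B_rot4 p q : \det (1%:M - rot4 p q) =
  (1 + qnorm2 p * qnorm2 q - 2 * q0 p * q0 q) ^+ 2
  - 4 * (qnorm2 p - q0 p ^+ 2) * (qnorm2 q - q0 q ^+ 2).
Proof.
have -> : 1%:M - rot4 p q = \matrix_(i, j)
    ((i == j :> nat)%:R - qcoordn (qmul (qmul p (qunit j)) (qconj q)) i).
  by apply/matrixP => i j; rewrite !mxE.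
rewrite det_expand_row0 !big_ord_recr big_ord0 !det_expand_row0 !big_ord_recr !big_ord0.
rewrite !det_expand_row0 !big_ord_recr !big_ord0 !det_mx11 /= !mxE /bump /=.
by case: p q => [p0 p1 p2 p3] [q0 q1 q2 q3]; rewrite /qnorm2 /qmul /qconj /=; ring.
Qed.

Lemma trace_Psi1 p : \tr (Psi1 p) = (2 * q0 p)%:C%C.
Proof.
rewrite /mxtrace !big_ord_recr big_ord0 /= !mxE /= add0r addcJ /=.
by rewrite rmorphM rmorph_nat.
Qed.

Lemma nu_contrib_rot4 p q g L : qnorm2 p = 1 -> qnorm2 q = 1 ->
  dphi_mx g L = rot4 p q ->
  nu_contrib (hdiag p q) g L = (1 / (2 * (qre p - qre q)))%:C%C.
Proof.
move=> Hp Hq E; rewrite /nu_contrib /Delta4p /Delta4m /= E det1B_rot4 Hp Hq !trace_Psi1.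
rewrite -rmorphB -fmorph_div /qre; congr (_%:C)%C.
have -> : (1 + 1 * 1 - 2 * q0 p * q0 q) ^+ 2 - 4 * (1 - q0 p ^+ 2) * (1 - q0 q ^+ 2) =
          4 * (q0 p - q0 q) ^+ 2 by ring.
rewrite ger0_norm; last by rewrite mulr_ge0 // sqr_ge0.
(* If [Re p = Re q], both sides are [0] by the convention [x / 0 = 0]. *)
have [->|ne] := eqVneq (q0 p) (q0 q); first by rewrite !subrr mul0r mulr0 invr0 mulr0.
by field; rewrite subr_eq0.
Qed.

End LocalContribution.

Section FixedPointFrame.
Context {R : realType}.
Variables (g f gam : 'M[R]_5) (gh fh gamh : hmat R) (x : 'cV[R]_5).
Hypotheses (Hgh : SU11H gh) (Hfh : SU11H fh) (Hgamh : SU11H gamh).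
Hypotheses (Hgeta : eta_of gh g) (Hfeta : eta_of fh f) (Hgameta : eta_of gamh gam).
Hypothesis (Hg : SOp41 g).
Hypotheses (Hgx : g *m e5 R = x) (Hgamx : gam *m f *m x = x).

Let o := hact gh (qzero R).

Let o_ball : qnorm2 o < 1.
Proof. by apply: hact_ball; rewrite // qnorm20 ltr01. Qed.

Let zeta_o : zeta o = x.
Proof. by rewrite Hgeta ?qnorm20 ?ltr01 // zeta0 Hgx. Qed.

Lemma frame_conj_fixes_origin :
  hact (hmul (hinv gh) (hmul gamh (hmul fh gh))) (qzero R) = qzero R.
Proof.
have n0 : qnorm2 (qzero R) < 1 by rewrite qnorm20 ltr01.
have fix_o : hact gamh (hact fh o) = o.
  have Hfo := hact_ball Hfh o_ball.
  apply: zeta_inj (hact_ball Hgamh Hfo) o_ball _.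
  by rewrite Hgameta // Hfeta // zeta_o mulmxA Hgamx.
have Hfg := SU11H_mul Hfh Hgh.
rewrite (hact_comp (SU11H_inv Hgh) (SU11H_mul Hgamh Hfg) n0).
rewrite (hact_comp Hgamh Hfg n0) (hact_comp Hfh Hgh n0) -/o fix_o.
by rewrite /o -(hact_comp (SU11H_inv Hgh) Hgh n0) hinv_l // hact1.
Qed.

Let M := hmul (hinv gh) (hmul gamh (hmul fh gh)).

Lemma frame_conj_diag : exists p q, [/\ qnorm2 p = 1, qnorm2 q = 1 & M = hdiag p q].
Proof.
apply: SU11H_fix0 frame_conj_fixes_origin.
by apply: SU11H_mul (SU11H_inv Hgh) (SU11H_mul Hgamh (SU11H_mul Hfh Hgh)).
Qed.

Lemma frame_conj_rot5 p q : qnorm2 p = 1 -> qnorm2 q = 1 -> M = hdiag p q ->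
  invmx g *m (gam *m f) *m g = rot5 p q.
Proof.
move=> Hp Hq EM; apply: eta_unique (eta_diag Hp Hq); rewrite -EM /M -!mulmxA.
have Ug : g \in unitmx by case: Hg => /lorentz_unit.
apply: (eta_mul (SU11H_inv Hgh) (SU11H_mul Hgamh (SU11H_mul Hfh Hgh))); first exact: eta_inv.
exact: eta_mul Hgamh (SU11H_mul Hfh Hgh) Hgameta (eta_mul Hfh Hgh Hfeta Hgeta).
Qed.

Variables (Gam : 'M[R]_5 -> Prop) (Gamh : hmat R -> Prop).
Hypotheses (HGsub : is_subgroup5 Gam) (HGso : forall A, Gam A -> SOp41 A).
Hypotheses (HGdisc : discrete5 Gam) (HGtf : torsion_free5 Gam).
Hypotheses (HGhsub : is_subgroupH Gamh) (HGhsu : forall A, Gamh A -> SU11H A).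
Hypothesis (HGheta : forall A, Gamh A -> exists2 E, Gam E & eta_of A E).
Hypothesis (HGhinj : forall A B E, Gamh A -> Gamh B -> eta_of A E -> eta_of B E -> A = B).
Hypotheses (Hgam : Gam gam) (Hgamh_lift : Gamh gamh).

(* The lift of [gam] is forced: any other lift [h] of an element of [Gam] moving [x]
   like [f] differs from [gam^-1] by an element fixing [x], which is trivial. *)
Lemma spin_frame_unique s h : Spin4 s -> Gamh h ->
  hmul fh gh = hmul h (hmul gh s) -> s = M.
Proof.
move=> [s01 [s10 [ns0 ns1]]] Hh Heq.
have sE : s = hdiag (h00 s) (h11 s) by case: s s01 s10 {ns0 ns1 Heq} => ???? /= -> ->.
have SUs : SU11H s by rewrite sE; apply: SU11H_diag.
have SUh := HGhsu Hh.
have n0 : qnorm2 (qzero R) < 1 by rewrite qnorm20 ltr01.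
have s0 : hact s (qzero R) = qzero R by rewrite sE hact_diag // qmulq0 qmul0q.
have fo : hact fh o = hact h o.
  move: (congr1 (fun A => hact A (qzero R)) Heq) => /=.
  rewrite (hact_comp Hfh Hgh n0) (hact_comp SUh (SU11H_mul Hgh SUs) n0).
  by rewrite (hact_comp Hgh SUs n0) s0.
have [E HE HhE] := HGheta Hh.
have fxE : f *m x = E *m x by rewrite -zeta_o -Hfeta // fo HhE ?hact_ball.
have [H1h [HMh _]] := HGhsub; have [_ [HM _]] := HGsub.
have gamE1 : gam *m E = 1.
  apply: (stabilizer_trivial HGsub HGso HGdisc HGtf Hg (HM _ _ Hgam HE)).
  by rewrite Hgx -mulmxA -fxE mulmxA.
have gamh_h : hmul gamh h = hone R.
  by apply: (HGhinj (HMh _ _ Hgamh_lift Hh) H1h _ eta1); rewrite -gamE1; apply: eta_mul.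
by rewrite /M Heq [hmul gamh (hmul h _)]hmulA gamh_h hmul1m hmulA hinv_l // hmul1m.
Qed.

End FixedPointFrame.

Unset Implicit Arguments.
Theorem theorem7p3 (R : realType)
  (Gam : 'M[R]_5 -> Prop) (Gamh : hmat R -> Prop)
  (* Gamma: discrete torsion-free subgroup of SO^+(4,1), M = Gamma\H^4 closed *)
  (HGsub : is_subgroup5 Gam) (HGso : forall A, Gam A -> SOp41 A)
  (HGdisc : discrete5 Gam) (HGtf : torsion_free5 Gam) (HGcc : cocompact5 Gam)
  (* spin structure: hat Gamma in SU(1,1;H) mapped isomorphically onto Gamma by eta *)
  (HGhsub : is_subgroupH Gamh) (HGhsu : forall A, Gamh A -> SU11H A)
  (HGheta : forall A, Gamh A -> exists2 E, Gam E & eta_of A E)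
  (HGhinj : forall A B E, Gamh A -> Gamh B -> eta_of A E -> eta_of B E -> A = B)
  (HGhsurj : forall E, Gam E -> exists2 A, Gamh A & eta_of A E)
  (* phi = f_star orientation-preserving isometry, hat phi = hat f_star its lift *)
  (f : 'M[R]_5) (fh : hmat R)
  (Hf : SOp41 f) (HfN : normalizes5 f Gam)
  (Hfh : SU11H fh) (HfhN : normalizesH fh Gamh) (Hfeta : eta_of fh f)
  (* P = Gamma x, with g e5 = x and a lift hat g of g *)
  (x : 'cV[R]_5) (Hx : inH4 x)
  (g : 'M[R]_5) (gh : hmat R) (Hg : SOp41 g) (Hgx : g *m e5 R = x)
  (Hgh : SU11H gh) (Hgeta : eta_of gh g)
  (* gamma in Gamma with gamma f x = x, and its lift hat gamma in hat Gamma *)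
  (gam : 'M[R]_5) (gamh : hmat R) (Hgam : Gam gam) (Hgamx : gam *m f *m x = x)
  (Hgamh : Gamh gamh) (Hgameta : eta_of gamh gam)
  (* P = Gamma x is an isolated fixed point of phi *)
  (Hiso : exists2 eps : R, 0 < eps & forall y, inH4 y ->
           (forall i, `|y i 0 - x i 0| < eps) ->
           (exists2 d, Gam d & d *m f *m y = y) ->
           exists2 d, Gam d & d *m y = x) :
  exists p q : quat R,
    [/\ qnorm2 p = 1, qnorm2 q = 1,
        hmul (hinv gh) (hmul gamh (hmul fh gh)) = hdiag p q &
        forall s : hmat R, Spin4 s ->
          (exists2 h, Gamh h & hmul fh gh = hmul h (hmul gh s)) ->
          nu_contrib s g (gam *m f) = ((1 / (2 * (qre p - qre q)))%:C)%C].
Proof.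
(* Isolation of [P] only ensures [Re p <> Re q]. *)
have SUgam := HGhsu _ Hgamh.
have [p [q [Hp Hq EM]]] := frame_conj_diag Hgh Hfh SUgam Hgeta Hfeta Hgameta Hgx Hgamx.
exists p, q; split => // s Hs [h Hh Heq].
rewrite (spin_frame_unique Hgh Hfh SUgam Hgeta Hfeta Hgameta Hg Hgx Hgamx
           HGsub HGso HGdisc HGtf HGhsub HGhsu HGheta HGhinj Hgam Hgamh Hs Hh Heq) EM.
apply: nu_contrib_rot4 => //; apply: dphi_mx_rot5.
exact: (frame_conj_rot5 Hgh Hfh SUgam Hgeta Hfeta Hgameta Hg Hp Hq EM).
Qed.
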